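(* $\mathrm{GL}_3(\mathbb{F}_5)$ does not contain a subgroup isomorphic to $A_5\times V_4$.
   Context: $V_4\cong C_2\times C_2$ is the Klein four-group. *)

From mathcomp Require Import all_boot all_algebra all_fingroup all_solvable.
From mathcomp Require Import alt.
Set Implicit Arguments. Unset Strict Implicit. Unset Printing Implicit Defensive.

Definition A5 : {group {perm 'I_5}} := Alt_group 'I_5.

Definition V4 : {group ('Z_2 * 'Z_2)} :=
  setX_group [group of [set: 'Z_2]] [group of [set: 'Z_2]].

Definition A5xV4 : {group ({perm 'I_5} * ('Z_2 * 'Z_2))} := setX_group A5 V4.

From mathcomp Require Import all_boot all_algebra all_fingroup all_solvable alt.
Set Implicit Arguments. Unset Strict Implicit. Unset Printing Implicit Defensive.
Import GRing.Theory.

(* Let g_i be commuting involutions over a field of characteristic other than 2.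
   For each choice of signs, the product over i of the projections (1 +- g_i)/2 is
   an idempotent; these are pairwise orthogonal, sum to 1, and every product of the
   g_i is a +-1-combination of them.  In M_n(F) at most n of them are nonzero, so
   the g_i generate at most 2^n elements.  But A_5 x V_4 contains V_4 x V_4, of
   order 16 > 2^3. *)

Local Open Scope ring_scope.

Lemma commrZ (R : pzRingType) (A : algType R) (a : R) (x y : A) :
  GRing.comm x y -> GRing.comm x (a *: y).
Proof. by rewrite /GRing.comm -scalerAl -scalerAr => ->. Qed.

Lemma prodr_eigenvector (R : comPzRingType) (A : algType R) (I : Type) (r : seq I)
    (u : I -> A) (c : I -> R) (v : A) :
    (forall i, u i * v = c i *: v) ->
  \prod_(i <- r) u i * v = (\prod_(i <- r) c i) *: v.
Proof.
move=> uv; elim: r => [|i r IHr]; first by rewrite !big_nil mul1r scale1r.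
by rewrite !big_cons -mulrA IHr -scalerAr uv scalerA mulrC.
Qed.

Lemma prodr_rem_comm (R : pzSemiRingType) (I : eqType) (r : seq I) (F : I -> R) i :
    i \in r -> (forall j, GRing.comm (F i) (F j)) ->
  \prod_(j <- r) F j = F i * \prod_(j <- rem i r) F j.
Proof.
move=> + Fi_comm; elim: r => // j r IHr; rewrite big_cons /=.
have [<- // | ji] := eqVneq j i.
rewrite in_cons eq_sym (negPf ji) big_cons => /IHr ->.
by rewrite !mulrA (Fi_comm j).
Qed.

Lemma card_nonzero_orthogonal_idempotents (F : fieldType) (n : nat) (T : finType)
    (e : T -> 'M[F]_n) :
    (forall t, e t * e t = e t) -> (forall s t, s != t -> e s * e t = 0) ->
  (#|[pred t | e t != 0%R]| <= n)%N.
Proof.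
move=> e_idem e_orth; set N := [pred t | e t != 0].
pose v t : 'rV_n := if [pick i | row i (e t) != 0] is Some i then row i (e t) else 0.
have v_neq0 t : t \in N -> v t != 0.
  rewrite inE /v; case: pickP => [//|row_e0]; apply: contra => _.
  by apply/eqP/row_matrixP => i; rewrite row0; apply/eqP/negbFE/row_e0.
have v_mul s t : v t *m e s = if s == t then v t else 0.
  rewrite /v; case: pickP => [i _|_]; last by rewrite mul0mx; case: eqP.
  rewrite -row_mul mulmxE; have [->|st] := eqVneq s t; first by rewrite e_idem.
  by rewrite e_orth 1?eq_sym // row0.
pose B := \matrix_(j < #|N|) v (enum_val j).
suff /eqP <- : row_free B by apply: rank_leq_col.
apply/inj_row_free => w wB0; apply/rowP => j; rewrite mxE.
have := congr1 (mulmx^~ (e (enum_val j))) wB0.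
rewrite mul0mx (mulmx_sum_row w) mulmx_suml (bigD1 j) //= big1 => [|k kj].
  rewrite addr0 -scalemxAl rowK v_mul eqxx => /eqP.
  by rewrite scaler_eq0 (negPf (v_neq0 _ (enum_valP j))) orbF => /eqP.
by rewrite -scalemxAl rowK v_mul (inj_eq enum_val_inj) eq_sym (negPf kj) scaler0.
Qed.

Section CommutingInvolutions.

Variables (F : fieldType) (A : algType F) (I : finType) (g : I -> A).
Hypothesis two_neq0 : 2%:R != 0 :> F.
Hypothesis gC : forall i j, GRing.comm (g i) (g j).
Hypothesis g_invol : forall i, g i ^+ 2 = 1.

Definition eigenproj (b : bool) i : A := 2%:R^-1 *: (1 + (-1) ^+ b *: g i).

Lemma affine_involutionM i (c d : F) :
  (1 + c *: g i) * (1 + d *: g i) = (1 + c * d) *: 1 + (c + d) *: g i.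
Proof.
rewrite mulrDl !mulrDr !mulr1 mul1r -scalerAl -scalerAr scalerA -expr2 g_invol.
by rewrite !scalerDl scale1r [c *: g i + _]addrC addrACA [d *: g i + _]addrC.
Qed.

Lemma comm_eigenproj x b i : GRing.comm x (g i) -> GRing.comm x (eigenproj b i).
Proof. by move=> xg; apply/commrZ/commrD; [apply: commr1 | apply: commrZ]. Qed.

Lemma eigenproj_idem b i : eigenproj b i * eigenproj b i = eigenproj b i.
Proof.
rewrite /eigenproj -scalerAl -scalerAr scalerA affine_involutionM -signr_addb addbb expr0.
rewrite -[1 + 1]mulr2n -[(-1) ^+ b + _]mulr2n -!scalerMnl scale1r -mulrnDl -scaler_nat.
by rewrite scalerA -mulrA mulVf ?mulr1.
Qed.

Lemma eigenproj_orth b i : eigenproj b i * eigenproj (~~ b) i = 0.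
Proof.
rewrite /eigenproj -scalerAl -scalerAr affine_involutionM signrN.
by rewrite mulrN -expr2 sqrr_sign subrr addrN !scale0r addr0 !scaler0.
Qed.

Lemma sum_eigenproj i : \sum_b eigenproj b i = 1.
Proof.
rewrite big_bool /= /eigenproj -scalerDr addrACA -scalerDl expr1 expr0 addNr.
by rewrite scale0r addr0 -mulr2n -scaler_nat scalerA mulVf // scale1r.
Qed.

Lemma mul_eigenproj b i : g i * eigenproj b i = (-1) ^+ b *: eigenproj b i.
Proof.
rewrite /eigenproj -scalerAr [RHS]scalerA mulrC -scalerA; congr (_ *: _).
rewrite mulrDr mulr1 -scalerAr -expr2 g_invol scalerDr scalerA -expr2 sqrr_sign.
by rewrite scale1r addrC.
Qed.

Lemma eigenprojC b i c j : GRing.comm (eigenproj b i) (eigenproj c j).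
Proof. by apply/comm_eigenproj/commr_sym/comm_eigenproj. Qed.

Definition joint_eigenproj (S : {ffun I -> bool}) : A := \prod_i eigenproj (S i) i.

Lemma joint_eigenproj_idem S : joint_eigenproj S * joint_eigenproj S = joint_eigenproj S.
Proof.
rewrite -prodrM_comm => [|i j _ _]; last exact: eigenprojC.
by apply: eq_bigr => i _; rewrite eigenproj_idem.
Qed.

Lemma joint_eigenproj_orth S T : S != T -> joint_eigenproj S * joint_eigenproj T = 0.
Proof.
case: (pickP (fun i => S i != T i)) => [i STi _ | S_eq_T]; last first.
  by case/eqP; apply/ffunP => i; apply/eqP/negbFE/S_eq_T.
rewrite -prodrM_comm => [|k l _ _]; last exact: eigenprojC.
rewrite (prodr_rem_comm (mem_index_enum i)) => [|j]; last first.
  by apply/commrM; apply/commr_sym/commrM; apply: eigenprojC.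
have -> : T i = ~~ S i by move: STi; case: (S i) (T i) => [] [].
by rewrite eigenproj_orth mul0r.
Qed.

Lemma sum_joint_eigenproj : \sum_S joint_eigenproj S = 1.
Proof.
rewrite -(bigA_distr_bigA (fun i b => eigenproj b i)) /=.
by rewrite big1 // => i _; apply: sum_eigenproj.
Qed.

Lemma mul_joint_eigenproj i S :
  g i * joint_eigenproj S = (-1) ^+ S i *: joint_eigenproj S.
Proof.
rewrite /joint_eigenproj (prodr_rem_comm (mem_index_enum i)) => [|j].
  by rewrite mulrA mul_eigenproj -scalerAl.
exact: eigenprojC.
Qed.

Definition involution_prod (x : {ffun I -> bool}) : A := \prod_i g i ^+ x i.

Lemma involution_prod_spectral x :
  involution_prod x =
    \sum_(S : {ffun I -> bool}) (-1) ^+ (\sum_i (x i && S i)) *: joint_eigenproj S.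
Proof.
rewrite -[LHS]mulr1 -sum_joint_eigenproj mulr_sumr; apply: eq_bigr => S _.
rewrite -prodrXr; apply: prodr_eigenvector => i.
by case: (x i); rewrite ?expr1 ?expr0 ?mul1r ?scale1r // mul_joint_eigenproj.
Qed.

End CommutingInvolutions.

Lemma mx_commuting_involutions_card (F : fieldType) (n : nat) (I : finType)
    (g : I -> 'M[F]_n.+1) :
    2%:R != 0 :> F -> (forall i j, GRing.comm (g i) (g j)) ->
    (forall i, g i ^+ 2 = 1) -> injective (involution_prod g) -> (#|I| <= n.+1)%N.
Proof.
move=> two_neq0 gC g_invol g_inj.
pose parity (x : {ffun I -> bool}) :=
  [ffun S : {S | joint_eigenproj g S != 0} => odd (\sum_i (x i && val S i))].
have parity_inj : injective parity.
  move=> x y /ffunP xy; apply: g_inj; rewrite !involution_prod_spectral //.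
  apply: eq_bigr => S _; have [-> | S_neq0] := eqVneq (joint_eigenproj g S) 0.
    by rewrite !scaler0.
  by have := xy (exist _ S S_neq0); rewrite !ffunE -signr_odd => ->; rewrite signr_odd.
have := leq_card parity parity_inj; rewrite !card_ffun !card_bool card_sig leq_exp2l //.
move/leq_trans; apply; apply: card_nonzero_orthogonal_idempotents.
  exact: joint_eigenproj_idem.
exact: joint_eigenproj_orth.
Qed.

Local Open Scope group_scope.

Definition abelem2_basis (gT : finGroupType) (I : finType) (u : I -> gT) :=
  [/\ forall i j, commute (u i) (u j), forall i, u i ^+ 2 = 1
    & injective (fun x : {ffun I -> bool} => \prod_i u i ^+ x i)].

Lemma injm_abelem2_basis (gT rT : finGroupType) (G : {group gT})
    (f : {morphism G >-> rT}) (I : finType) (u : I -> gT) :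
    'injm f -> (forall i, u i \in G) -> abelem2_basis u -> abelem2_basis (f \o u).
Proof.
move=> inj_f uG [uC u2 u_inj].
have prodG (x : {ffun I -> bool}) : \prod_i u i ^+ x i \in G.
  by apply: group_prod => i _; rewrite groupX.
have f_prod (x : {ffun I -> bool}) : \prod_i f (u i) ^+ x i = f (\prod_i u i ^+ x i).
  rewrite morph_prod => [|i _]; last by rewrite groupX.
  by apply: eq_bigr => i _; rewrite morphX.
split=> [i j | i | x y] /=; first by rewrite /commute -!morphM // uC.
- by rewrite -morphX ?u2 ?morph1.
by rewrite !f_prod => /(injmP inj_f _ _ (prodG x) (prodG y)) /u_inj.
Qed.

Lemma GL_abelem2_basis_card (F : finFieldType) (n : nat) (I : finType)
    (u : I -> {'GL_n.+1[F]}) :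
  2%:R != 0 :> F -> abelem2_basis u -> (#|I| <= n.+1)%N.
Proof.
move=> two_neq0 [uC u2 u_inj]; pose g i : 'M[F]_n.+1 := GLval (u i).
have GLval_prod (x : {ffun I -> bool}) : GLval (\prod_i u i ^+ x i) = involution_prod g x.
  rewrite (big_morph _ (@GL_ME _ _) (GL_1E _ _)); apply: eq_bigr => i _.
  by case: (x i); rewrite ?expg1 ?expr1 ?expg0 ?expr0.
apply: (mx_commuting_involutions_card (g := g) two_neq0) => [i j | i | x y].
- by move: (congr1 GLval (uC i j)); rewrite !GL_ME.
- by move: (congr1 GLval (u2 i)); rewrite expg2 GL_ME GL_1E expr2.
by rewrite -!GLval_prod => E; apply/u_inj/val_inj.
Qed.

Lemma mulg_pair (gT hT : finGroupType) (a c : gT) (b d : hT) :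
  (a, b) * (c, d) = (a * c, b * d).
Proof. by []. Qed.

Lemma commute_pair (gT hT : finGroupType) (a c : gT) (b d : hT) :
  commute a c -> commute b d -> commute (a, b) (c, d).
Proof. by rewrite /commute !mulg_pair => -> ->. Qed.

Lemma commute_Z2xZ2 (a b : 'Z_2 * 'Z_2) : commute a b.
Proof. by case: a b => [a1 a2] [b1 b2]; apply: commute_pair; apply: Zp_addC. Qed.

Definition klein1 : {perm 'I_5} := tperm (inZp 0) (inZp 1) * tperm (inZp 2) (inZp 3).
Definition klein2 : {perm 'I_5} := tperm (inZp 0) (inZp 2) * tperm (inZp 1) (inZp 3).

Lemma klein_commute : commute klein1 klein2.
Proof.
by apply/permP => -[[|[|[|[|[|]]]]] ?] //; rewrite !permM !permE; apply: val_inj.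
Qed.

Lemma klein1_invol : klein1 ^+ 2 = 1.
Proof.
by apply/permP => -[[|[|[|[|[|]]]]] ?] //; rewrite !permM !permE; apply: val_inj.
Qed.

Lemma klein2_invol : klein2 ^+ 2 = 1.
Proof.
by apply/permP => -[[|[|[|[|[|]]]]] ?] //; rewrite !permM !permE; apply: val_inj.
Qed.

Lemma klein_pow_inj (b c b' c' : bool) :
  klein1 ^+ b * klein2 ^+ c = klein1 ^+ b' * klein2 ^+ c' -> b = b' /\ c = c'.
Proof.
(* klein1 ^+ b * klein2 ^+ c maps 0 to b + 2 c. *)
move/(congr1 (fun s : {perm 'I_5} => val (s (inZp 0)))).
by case: b c b' c' => [] [] [] []; rewrite /= ?mulg1 ?mul1g ?permM ?perm1 ?permE.
Qed.

Lemma Zp1_invol : Zp1 ^+ 2 = 1 :> 'Z_2.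
Proof. exact: val_inj. Qed.

Lemma Zp1_pow_inj (b b' : bool) : Zp1 ^+ b = Zp1 ^+ b' :> 'Z_2 -> b = b'.
Proof. by case: b b' => [] []. Qed.

Definition A5xV4_basis (i : 'I_4) : {perm 'I_5} * ('Z_2 * 'Z_2) :=
  match val i with
  | 0 => (klein1, 1)
  | 1 => (klein2, 1)
  | 2 => (1, (Zp1, 1))
  | _ => (1, (1, Zp1))
  end.

Lemma A5xV4_basis_mem i : A5xV4_basis i \in A5xV4.
Proof.
case: i => [[|[|[|[|]]]] ?] //; rewrite /= !in_setX /A5 Alt_even !inE !andbT.
all: by rewrite ?odd_permM ?odd_tperm ?odd_perm1.
Qed.

Lemma prod_ord4 (gT : finGroupType) (F : 'I_4 -> gT) :
  \prod_i F i = F 0%R * F 1%R * F 2%R * F 3%R.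
Proof.
rewrite !big_ord_recr big_ord0 /= mul1g.
by congr (F _ * F _ * F _ * F _); apply: val_inj.
Qed.

Lemma ord4_ind (P : 'I_4 -> Prop) : P 0%R -> P 1%R -> P 2%R -> P 3%R -> forall i, P i.
Proof.
move=> P0 P1 P2 P3 [[|[|[|[|]]]] lti4] //.
- by rewrite (_ : Ordinal _ = 0%R) //; apply: val_inj.
- by rewrite (_ : Ordinal _ = 1%R) //; apply: val_inj.
- by rewrite (_ : Ordinal _ = 2%R) //; apply: val_inj.
by rewrite (_ : Ordinal _ = 3%R) //; apply: val_inj.
Qed.

Lemma A5xV4_basis_prod (x : {ffun 'I_4 -> bool}) :
  \prod_i A5xV4_basis i ^+ x i =
    (klein1 ^+ x 0%R * klein2 ^+ x 1%R, (Zp1 ^+ x 2%R, Zp1 ^+ x 3%R)).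
Proof.
rewrite prod_ord4 /=.
case: (x 0%R) (x 1%R) (x 2%R) (x 3%R) => [] [] [] [].
all: by rewrite ?expg1 ?expg0 /A5xV4_basis /= ?mulg_pair ?mulg1 ?mul1g.
Qed.

Lemma A5xV4_basis_commute i j : commute (A5xV4_basis i) (A5xV4_basis j).
Proof.
apply: commute_pair (commute_Z2xZ2 _ _).
case: i j => [[|[|[|[|i]]]] ?] [[|[|[|[|j]]]] ?] //=; rewrite /commute ?mulg1 ?mul1g //.
  exact: klein_commute.
exact: esym klein_commute.
Qed.

Lemma A5xV4_basis_invol i : A5xV4_basis i ^+ 2 = 1.
Proof.
case: i => [[|[|[|[|i]]]] ?] //; rewrite expg2 /A5xV4_basis /= !mulg_pair ?mulg1 -?expg2.
all: by rewrite ?klein1_invol ?klein2_invol ?Zp1_invol.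
Qed.

Lemma A5xV4_basis_abelem2 : abelem2_basis A5xV4_basis.
Proof.
split=> [|| x y]; [exact: A5xV4_basis_commute | exact: A5xV4_basis_invol |].
rewrite /= !A5xV4_basis_prod => -[/klein_pow_inj [e0 e1] /Zp1_pow_inj e2 /Zp1_pow_inj e3].
by apply/ffunP; apply: ord4_ind.
Qed.

Theorem lemma3p18 :
  ~ exists H : {group {'GL_3['F_5]}},
      H \subset ('GL_3['F_5])%g /\ (H \isog A5xV4)%g.
Proof.
case=> H [_ /isog_symr /isogP [phi inj_phi _]].
have := GL_abelem2_basis_card (isT : 2%:R != 0 :> 'F_5)
  (injm_abelem2_basis inj_phi A5xV4_basis_mem A5xV4_basis_abelem2).
by rewrite card_ord.
Qed.
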